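(* Let $G$ be a trigraph and $\varphi\in\operatorname{Aut}(G)$. Then there exists a partial contraction sequence of $G$ of width at most $4\Delta(G)$ whose last partition is the partition of $V(G)$ into the orbits of $\langle\varphi\rangle$, i.e., which contracts $G$ to $G/\langle\varphi\rangle$. In particular, $\operatorname{tww}(G)\leq\max\{4\Delta(G),\operatorname{tww}(G/\langle\varphi\rangle)\}$.
   Context: A trigraph is a finite simple graph whose edges are each colored red or black. $\operatorname{Aut}(G)$ is the automorphism group of the underlying simple graph of $G$ (automorphisms need not preserve edge colors); $\Delta(G)$ is the maximum degree (both colors). The red degree of a vertex is the number of red edges incident to it. For a partition $\mathcal{P}$ of $V(G)$, the quotient trigraph $G/\mathcal{P}$ has vertex set $\mathcal{P}$; two distinct parts $U,W$ are joined by a black edge if every pair $\{u,w\}$ with $u\in U,w\in W$ is a black edge of $G$, are non-adjacent if no such pair is an edge, and are joined by a red edge otherwise. For a group $\Gamma\subseteq\operatorname{Aut}(G)$, $G/\Gamma$ is the quotient by the partition into $\Gamma$-orbits. A contraction sequence of an $n$-vertex trigraph $G$ is a sequence $\mathcal{P}_n,\dots,\mathcal{P}_1$ of partitions of $V(G)$ where $\mathcal{P}_n$ is the partition into singletons and each $\mathcal{P}_i$ arises from $\mathcal{P}_{i+1}$ by merging two parts; a partial contraction sequence is a prefix $\mathcal{P}_n,\dots,\mathcal{P}_i$. The width is the maximum red degree over the trigraphs $G/\mathcal{P}_j$ in the sequence, and $\operatorname{tww}(G)$ is the minimum width of a (complete) contraction sequence. *)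

From mathcomp Require Import all_boot all_fingroup.
From mathcomp Require Import boolp.
From mathcomp Require Import zify.
Set Implicit Arguments. Unset Strict Implicit. Unset Printing Implicit Defensive.

(* A trigraph on a finite vertex type T: a simple graph (symmetric irreflexive
   edge relation) whose edges are colored red or black; [tred] is the set of
   red edges (a symmetric subrelation of the edges); the other edges are black. *)
Record trigraph (T : finType) := Trigraph {
  tedge : rel T;
  tred : rel T;
  tedge_sym : symmetric tedge;
  tedge_irr : irreflexive tedge;
  tred_sym : symmetric tred;
  tred_sub : subrel tred tedge }.

Section Trigraphs.
Variable T : finType.
Implicit Types (G : trigraph T) (U W : {set T}) (P Q : {set {set T}}).

Definition tblack G x y := tedge G x y && ~~ tred G x y.

(* automorphism of the underlying simple graph (colors need not be preserved) *)
Definition is_aut G (phi : {perm T}) := forall x y, tedge G (phi x) (phi y) = tedge G x y.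

Definition degree G x := #|[set y | tedge G x y]|.
Definition red_degree G x := #|[set y | tred G x y]|.
Definition Delta G := \max_(x : T) degree G x.
Definition max_red_degree G := \max_(x : T) red_degree G x.

Definition all_black G U W := [forall u in U, forall w in W, tblack G u w].
Definition non_adj G U W := [forall u in U, forall w in W, ~~ tedge G u w].

Lemma non_adj_sym G U W : non_adj G U W = non_adj G W U.
Proof.
apply/forall_inP/forall_inP => H x xP; apply/forall_inP => y yP;
  by rewrite tedge_sym; move/forall_inP: (H y yP); apply.
Qed.

Lemma all_black_sym G U W : all_black G U W = all_black G W U.
Proof.
apply/forall_inP/forall_inP => H x xP; apply/forall_inP => y yP;
  by rewrite /tblack tedge_sym tred_sym; move/forall_inP: (H y yP); apply.
Qed.

End Trigraphs.

Section Quotients.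
Variable T : finType.
Implicit Types (G : trigraph T) (U W : {set T}) (P Q : {set {set T}}).

Definition part P := {U : {set T} | U \in P}.

Definition qedge G P : rel (part P) := fun X Y =>
  (val X != val Y) && ~~ non_adj G (val X) (val Y).
Definition qred G P : rel (part P) := fun X Y =>
  [&& val X != val Y, ~~ all_black G (val X) (val Y) & ~~ non_adj G (val X) (val Y)].

Arguments qedge G P : clear implicits.
Arguments qred G P : clear implicits.

Lemma qedge_sym G P : symmetric (qedge G P).
Proof. by move=> X Y; rewrite /qedge eq_sym non_adj_sym. Qed.
Lemma qedge_irr G P : irreflexive (qedge G P).
Proof. by move=> X; rewrite /qedge eqxx. Qed.
Lemma qred_sym G P : symmetric (qred G P).
Proof. by move=> X Y; rewrite /qred eq_sym non_adj_sym all_black_sym. Qed.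
Lemma qred_sub G P : subrel (qred G P) (qedge G P).
Proof. by move=> X Y /and3P[h1 _ h3]; rewrite /qedge h1 h3. Qed.

Definition quot G P : trigraph (part P) :=
  Trigraph (@qedge_sym G P) (@qedge_irr G P) (@qred_sym G P) (@qred_sub G P).

Definition singletons : {set {set T}} := [set [set x] | x : T].

Definition merge_step : rel {set {set T}} := fun P Q =>
  [exists U in P, exists W in P, (U != W) && (Q == (U :|: W) |: ((P :\ U) :\ W))].

(* A (partial) contraction sequence P_n, ..., P_i is represented by the list
   s = [:: P_{n-1}; ...; P_i]; the full sequence is singletons :: s. *)
Definition partial_ctr_seq (s : seq {set {set T}}) := path merge_step singletons s.
Definition last_part (s : seq {set {set T}}) := last singletons s.
(* complete: the last partition has (at most, when V(G) is empty) one part *)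
Definition complete_ctr_seq (s : seq {set {set T}}) :=
  partial_ctr_seq s /\ #|last_part s| <= 1.

Definition width G (s : seq {set {set T}}) :=
  \max_(P <- singletons :: s) max_red_degree (quot G P).

Definition tww_at_most G k := exists s, complete_ctr_seq s /\ width G s <= k.

Lemma merge_chain_exists n P : #|P| <= n ->
  exists s, path merge_step P s /\ #|last P s| <= 1.
Proof.
elim: n P => [|n IH] P hP.
  by exists [::]; split => //; apply: leq_trans hP _.
case: (leqP #|P| 1) => h1; first by exists [::].
case/card_gt1P: h1 => U [W [UP WP UW]].
set Q := (U :|: W) |: ((P :\ U) :\ W).
have hQ : #|Q| <= n.
  have e1 := cardsD1 U P; have e2 := cardsD1 W (P :\ U).
  have WU : (W \in P :\ U) by rewrite !inE eq_sym UW WP.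
  rewrite UP in e1; rewrite WU in e2.
  rewrite e1 e2 add1n !ltnS in hP.
  by rewrite cardsU1; case: (_ \notin _) => //; apply: ltnW.
have [s [ps ls]] := IH Q hQ.
exists (Q :: s); split => //=; rewrite ps andbT.
by apply/existsP; exists U; rewrite UP; apply/existsP; exists W; rewrite WP UW eqxx.
Qed.

Lemma tww_exists G : exists k, `[< tww_at_most G k >].
Proof.
have [s [ps ls]] := @merge_chain_exists #|singletons| singletons (leqnn _).
by exists (width G s); apply/asboolP; exists s.
Qed.

Definition tww G : nat := ex_minn (tww_exists G).

End Quotients.

From mathcomp Require Import all_boot all_fingroup.
From mathcomp Require Import boolp zify.
Set Implicit Arguments. Unset Strict Implicit. Unset Printing Implicit Defensive.

(* Number the points of each cycle of phi from a fixed root and call a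
   level-j block the points of a cycle whose positions have the same quotient
   by 2^j: level-0 blocks are singletons and level-|T| blocks are the cycles.
   Passing from level j to level j+1 merges blocks two by two; meanwhile every
   part is a union of level-j blocks inside one level-(j+1) block, so its points
   are phi^i(c), i < 2^(j+1), for a single c.  As phi is an automorphism, a part
   adjacent to it contains phi^i(z) for some neighbour z of c, and for a fixed z
   these points meet at most four level-j blocks: every part has at most 4 Delta
   neighbours.  A contraction sequence of G/<phi> then lifts to one of G
   continuing the first, without increasing red degrees. *)

Section MergingParts.
Variable T : finType.
Implicit Types (P Q R : {set {set T}}) (D X Y Z : {set T}).

Definition merge_parts P X Y := (X :|: Y) |: ((P :\ X) :\ Y).

Lemma merge_stepP P Q :
  reflect (exists X Y, [/\ X \in P, Y \in P, X != Y & Q = merge_parts P X Y])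
          (merge_step P Q).
Proof.
apply: (iffP existsP) => [[X /andP[XP /existsP[Y /and3P[YP nXY /eqP->]]]]|].
  by exists X, Y.
case=> X [Y [XP YP nXY ->]]; exists X; rewrite XP /=.
by apply/existsP; exists Y; rewrite YP nXY eqxx.
Qed.

Lemma card_merge_parts P X Y :
  X \in P -> Y \in P -> X != Y -> #|merge_parts P X Y| < #|P|.
Proof.
move=> XP YP nXY; have YPX : Y \in P :\ X by rewrite !inE eq_sym nXY.
rewrite (cardsD1 X P) (cardsD1 Y (P :\ X)) XP YPX cardsU1.
by case: (_ \notin _); rewrite ?add1n ?add0n ltnS ?leqnSn.
Qed.

Lemma partition_merge_parts P D X Y : partition P D ->
  X \in P -> Y \in P -> X != Y -> partition (merge_parts P X Y) D.
Proof.
move=> partP XP YP nXY; have YPX : Y \in P :\ X by rewrite !inE eq_sym nXY.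
have partPXY := partitionD1 (partitionD1 partP XP) YPX.
have XY0 : X :|: Y != set0.
  by rewrite -card_gt0 (leq_trans _ (subset_leq_card (subsetUl X Y))) ?card_gt0
    ?(partition_neq0 partP XP).
have XYD : X :|: Y \subset D by rewrite subUset !(partitionS partP).
rewrite [D :\: _ :\: _]setDDl in partPXY.
have disXY : [disjoint X :|: Y & D :\: (X :|: Y)].
  by rewrite disjoint_sym; apply/setDidPl; rewrite setDDl setUid.
rewrite -(setID D (X :|: Y)) (setIidPr XYD).
exact: partitionU1 partPXY XY0 disXY.
Qed.

Lemma pblock_merge_parts P D X Y x : partition P D ->
    X \in P -> Y \in P -> X != Y -> x \in D ->
  pblock (merge_parts P X Y) x = if x \in X :|: Y then X :|: Y else pblock P x.
Proof.
move=> partP XP YP nXY xD.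
have tiM := partition_trivIset (partition_merge_parts partP XP YP nXY).
case: ifPn => xXY; first by apply: def_pblock; rewrite // !inE eqxx.
have xPx : x \in pblock P x by rewrite mem_pblock (cover_partition partP).
have PxP : pblock P x \in P by rewrite pblock_mem ?(cover_partition partP).
apply: def_pblock => //; rewrite !inE PxP andbT; apply/orP; right.
by apply/andP; split; apply: contraNneq xXY => <-; rewrite inE xPx ?orbT.
Qed.

Lemma path_merge_partition P D s : partition P D -> path (@merge_step T) P s ->
  {in s, forall Q, partition Q D}.
Proof.
elim: s P => [//|Q s IH] P partP /= /andP[/merge_stepP[X [Y [XP YP nXY ->]]] ps].
have partQ := partition_merge_parts partP XP YP nXY.
by move=> R; rewrite inE => /predU1P[->|]; last exact: IH partQ ps R.
Qed.

Section Fibers.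
Variables (rT : eqType) (f : T -> rT).

Definition fibers_refine P := forall x y, f x = f y -> pblock P x = pblock P y.
Definition constant_on_parts P := forall x y, pblock P x = pblock P y -> f x = f y.

Lemma eq_pblock_preim x y :
  (pblock (preim_partition f [set: T]) x == pblock (preim_partition f [set: T]) y)
  = (f x == f y).
Proof.
have [_ tiP _] := and3P (preim_partitionP f [set: T]).
rewrite eq_pblock ?(cover_partition (preim_partitionP f _)) //.
by rewrite pblock_equivalence_partition // => ? ? ? _ _ _; split=> // /eqP->.
Qed.

Lemma preim_partition_fibers : fibers_refine (preim_partition f [set: T]).
Proof. by move=> x y /eqP; rewrite -eq_pblock_preim => /eqP. Qed.

Lemma merge_fibers_refine P X Y : partition P [set: T] ->
  X \in P -> Y \in P -> X != Y -> fibers_refine P -> fibers_refine (merge_parts P X Y).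
Proof.
move=> partP XP YP nXY fP x y /fP exy.
have memE v Z : Z \in P -> (v \in Z) = (pblock P v == Z).
  move=> ZP; apply/idP/eqP => [|<-]; first exact: def_pblock (partition_trivIset partP) ZP.
  by rewrite mem_pblock (cover_partition partP).
by rewrite !(pblock_merge_parts partP) // !inE !memE // exy.
Qed.

Lemma merge_constant_on_parts P X Y x0 y0 : partition P [set: T] ->
    X \in P -> Y \in P -> X != Y -> x0 \in X -> y0 \in Y -> f x0 = f y0 ->
  constant_on_parts P -> constant_on_parts (merge_parts P X Y).
Proof.
move=> partP XP YP nXY x0X y0Y fxy0 fP.
have tiP := partition_trivIset partP.
have fXY v : v \in X :|: Y -> f v = f x0.
  rewrite inE => /orP[vX|vY]; last rewrite fxy0; apply: fP.
    by rewrite (def_pblock tiP XP vX) (def_pblock tiP XP x0X).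
  by rewrite (def_pblock tiP YP vY) (def_pblock tiP YP y0Y).
have inPv v : v \in pblock P v by rewrite mem_pblock (cover_partition partP).
move=> x y; rewrite !(pblock_merge_parts partP) //.
case: ifPn => xXY; case: ifPn => yXY.
- by rewrite !fXY.
- by move=> eXY; case/negP: yXY; rewrite eXY inPv.
- by move=> eXY; case/negP: xXY; rewrite -eXY inPv.
- exact: fP.
Qed.

Lemma partition_eq_preim P : partition P [set: T] ->
  fibers_refine P -> constant_on_parts P -> P = preim_partition f [set: T].
Proof.
move=> partP Pf fP; rewrite -(preim_partition_pblock partP).
by apply: eq_in_imset => x _; apply/setP => y; rewrite !inE; apply/eqP/eqP => [/fP|/Pf].
Qed.

End Fibers.

Lemma preim_partition_constant (rT rT' : eqType) (f : T -> rT) (g : T -> rT') :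
    (forall x y, f x = f y -> g x = g y) ->
  constant_on_parts g (preim_partition f [set: T]).
Proof. by move=> fg x y /eqP; rewrite eq_pblock_preim => /eqP/fg. Qed.

Lemma preim_partition_inj (rT : eqType) (f : T -> rT) :
  injective f -> preim_partition f [set: T] = singletons T.
Proof.
move=> injf; apply/setP => Z; apply/imsetP/imsetP => -[x _ ->]; exists x => //;
  by apply/setP => y; rewrite !inE (inj_eq injf) eq_sym.
Qed.

Lemma partition_singletons : partition (singletons T) [set: T].
Proof. by rewrite -(preim_partition_inj (@inj_id T)); apply: preim_partitionP. Qed.

Lemma merge_path_to_fibers (rT : eqType) (f g : T -> rT) R :
    partition R [set: T] -> fibers_refine f R -> constant_on_parts g R ->
  exists s, [/\ path (@merge_step T) R s, last R s = preim_partition g [set: T] &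
    {in s, forall Q, [/\ partition Q [set: T], fibers_refine f Q & constant_on_parts g Q]}].
Proof.
have [n] := ubnP #|R|; elim: n R => // n IH R /ltnSE-cardR partR fR gR.
have pblockR v : pblock R v \in R by rewrite pblock_mem ?(cover_partition partR).
have [/existsP[x /existsP[y /andP[/eqP gxy nxy]]]|noMerge] :=
  boolP [exists x, exists y, (g x == g y) && (pblock R x != pblock R y)].
  have xX : x \in pblock R x by rewrite mem_pblock (cover_partition partR).
  have yY : y \in pblock R y by rewrite mem_pblock (cover_partition partR).
  have partM := partition_merge_parts partR (pblockR x) (pblockR y) nxy.
  have fM := merge_fibers_refine partR (pblockR x) (pblockR y) nxy fR.
  have gM := merge_constant_on_parts partR (pblockR x) (pblockR y) nxy xX yY gxy gR.
  have cardM := card_merge_parts (pblockR x) (pblockR y) nxy.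
  have [s [ps ls Qs]] := IH _ (leq_trans cardM cardR) partM fM gM.
  exists (merge_parts R (pblock R x) (pblock R y) :: s); split => //=.
    by rewrite ps andbT; apply/merge_stepP; exists (pblock R x), (pblock R y).
  by move=> Q; rewrite inE => /predU1P[->|/Qs].
exists [::]; split => //=; apply: partition_eq_preim => // x y gxy.
apply/eqP; apply: contraNT noMerge => nxy.
by apply/existsP; exists x; apply/existsP; exists y; rewrite gxy eqxx.
Qed.

End MergingParts.

Section CycleCoordinates.
Variables (T : finType) (phi : {perm T}).

Definition orbit_root x := odflt x [pick y in porbit phi x].
Definition orbit_pos x := index x (traject phi (orbit_root x) #|porbit phi x|).
Definition block_start j x :=
  iter (orbit_pos x %/ 2 ^ j * 2 ^ j) phi (orbit_root x).

Lemma porbit_iter n x : porbit phi (iter n phi x) = porbit phi x.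
Proof. by rewrite -permX porbit_perm. Qed.

Lemma orbit_root_in x : orbit_root x \in porbit phi x.
Proof. by rewrite /orbit_root; case: pickP => [//|/(_ x)]; rewrite porbit_id. Qed.

Lemma orbit_root_eq x y : porbit phi x = porbit phi y -> orbit_root x = orbit_root y.
Proof. by rewrite /orbit_root => ->; case: pickP => [//|/(_ y)]; rewrite porbit_id. Qed.

Lemma porbit_root x : porbit phi (orbit_root x) = porbit phi x.
Proof. by apply/eqP; rewrite eq_porbit_mem orbit_root_in. Qed.

Lemma orbit_root_iter n x : orbit_root (iter n phi x) = orbit_root x.
Proof. exact/orbit_root_eq/porbit_iter. Qed.

Lemma orbit_root_root x : orbit_root (orbit_root x) = orbit_root x.
Proof. exact/orbit_root_eq/porbit_root. Qed.

Lemma eq_orbit_root x y : (orbit_root x == orbit_root y) = (porbit phi x == porbit phi y).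
Proof.
apply/eqP/eqP => [exy|/orbit_root_eq//].
by rewrite -porbit_root exy porbit_root.
Qed.

Lemma mem_traject_root x : x \in traject phi (orbit_root x) #|porbit phi x|.
Proof. by rewrite -porbit_root -porbit_traject porbit_root porbit_id. Qed.

Lemma orbit_pos_lt x : orbit_pos x < #|porbit phi x|.
Proof. by rewrite -[ltnRHS](size_traject phi (orbit_root x)) index_mem mem_traject_root. Qed.

Lemma iter_orbit_pos x : iter (orbit_pos x) phi (orbit_root x) = x.
Proof. by rewrite -(nth_traject _ (orbit_pos_lt x)) nth_index ?mem_traject_root. Qed.

Lemma orbit_pos_iter_root i x :
  i < #|porbit phi x| -> orbit_pos (iter i phi (orbit_root x)) = i.
Proof.
move=> ilt; rewrite /orbit_pos orbit_root_iter orbit_root_root porbit_iter porbit_root.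
rewrite -(nth_traject _ ilt) index_uniq ?size_traject //.
by have := uniq_traject_porbit phi (orbit_root x); rewrite porbit_root.
Qed.

Lemma iter_mod_porbit n x : iter n phi x = iter (n %% #|porbit phi x|) phi x.
Proof.
have iter_mul m : iter (m * #|porbit phi x|) phi x = x.
  by elim: m => [//|m IHm]; rewrite mulSn iterD IHm iter_porbit.
by rewrite {1}(divn_eq n #|porbit phi x|) addnC iterD iter_mul.
Qed.

Lemma orbit_pos_iter i z :
  orbit_pos (iter i phi z) = (orbit_pos z + i) %% #|porbit phi z|.
Proof.
rewrite -{1}(iter_orbit_pos z) -iterD iter_mod_porbit porbit_root addnC.
by rewrite orbit_pos_iter_root // ltn_mod lt0n card_porbit_neq0.
Qed.

Lemma block_start_eqP j x y :
  block_start j x = block_start j y <->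
  orbit_root x = orbit_root y /\ orbit_pos x %/ 2 ^ j = orbit_pos y %/ 2 ^ j.
Proof.
have posE z : orbit_pos (block_start j z) = orbit_pos z %/ 2 ^ j * 2 ^ j.
  by rewrite orbit_pos_iter_root // (leq_ltn_trans (leq_divM _ _)) ?orbit_pos_lt.
split => [exy|[er ep]]; last by rewrite /block_start er ep.
have rootE z : orbit_root (block_start j z) = orbit_root z.
  by rewrite orbit_root_iter orbit_root_root.
split; first by rewrite -(rootE x) exy rootE.
by apply/eqP; rewrite -(eqn_pmul2r (expn_gt0 2 j)) -!posE exy.
Qed.

Lemma block_start_succ j x y :
  block_start j x = block_start j y -> block_start j.+1 x = block_start j.+1 y.
Proof.
by move/block_start_eqP=> [er ep]; apply/block_start_eqP; rewrite expnSr !divnMA ep.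
Qed.

Lemma block_start0_inj : injective (block_start 0).
Proof.
move=> x y /block_start_eqP[er]; rewrite !divn1 => ep.
by rewrite -(iter_orbit_pos x) -(iter_orbit_pos y) er ep.
Qed.

Lemma block_start_top x : block_start #|T| x = orbit_root x.
Proof.
rewrite /block_start divn_small //; apply: leq_trans (orbit_pos_lt x) _.
exact: leq_trans (max_card _) (ltnW (ltn_expl _ (ltnSn 1))).
Qed.

Lemma block_start_idem j x : block_start j (block_start j x) = block_start j x.
Proof.
apply/block_start_eqP; rewrite orbit_root_iter orbit_root_root.
rewrite orbit_pos_iter_root ?mulnK ?expn_gt0 //.
by rewrite (leq_ltn_trans (leq_divM _ _)) ?orbit_pos_lt.
Qed.

Lemma iter_block_start j x : iter (orbit_pos x %% 2 ^ j) phi (block_start j x) = x.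
Proof. by rewrite -iterD addnC -divn_eq iter_orbit_pos. Qed.

Lemma block_start_iter j i z : block_start j (iter i phi z) =
  iter ((orbit_pos z + i) %% #|porbit phi z| %/ 2 ^ j * 2 ^ j) phi (orbit_root z).
Proof. by rewrite /block_start orbit_pos_iter orbit_root_iter. Qed.

End CycleCoordinates.

Section DyadicStages.
Variables (T : finType) (phi : {perm T}).

Definition dyadic_stage (R : {set {set T}}) :=
  partition R [set: T] /\ exists j,
    fibers_refine (block_start phi j) R /\ constant_on_parts (block_start phi j.+1) R.

Lemma dyadic_level0 : preim_partition (block_start phi 0) [set: T] = singletons T.
Proof. exact/preim_partition_inj/block_start0_inj. Qed.

Lemma dyadic_level_top : preim_partition (block_start phi #|T|) [set: T] = porbits phi.
Proof.
apply/setP => Z; apply/imsetP/imsetP => -[x _ ->]; exists x => //; apply/setP => y;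
  by rewrite !inE !block_start_top eq_orbit_root eq_porbit_mem porbit_sym.
Qed.

Lemma dyadic_level_stage j : dyadic_stage (preim_partition (block_start phi j) [set: T]).
Proof.
split; first exact: preim_partitionP.
exists j; split; first exact: preim_partition_fibers.
exact/preim_partition_constant/block_start_succ.
Qed.

Lemma dyadic_stages j : exists s, [/\ partial_ctr_seq s,
  last_part s = preim_partition (block_start phi j) [set: T] &
  {in singletons T :: s, forall R, dyadic_stage R}].
Proof.
elim: j => [|j [s [ps ls Rs]]].
  exists [::]; rewrite /last_part /= -dyadic_level0; split => // R.
  by rewrite inE => /eqP->; apply: dyadic_level_stage.
have [s' [ps' ls' Rs']] := merge_path_to_fibers (preim_partitionP _ _)
  (@preim_partition_fibers _ _ (block_start phi j))
  (preim_partition_constant (@block_start_succ _ phi j)).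
exists (s ++ s'); split.
- by rewrite /partial_ctr_seq cat_path -/(partial_ctr_seq s) ps -/(last_part s) ls.
- by rewrite /last_part last_cat -/(last_part s) ls.
move=> R; rewrite -cat_cons mem_cat => /orP[/Rs//|/Rs'[partR fR cR]].
by split=> //; exists j.
Qed.

End DyadicStages.

Lemma card_bigcup_leq (I U : finType) (A : {set I}) (F : I -> {set U}) k :
  (forall i, i \in A -> #|F i| <= k) -> #|\bigcup_(i in A) F i| <= #|A| * k.
Proof.
move=> leFk; rewrite -cover_imset; apply: leq_trans (leq_card_cover _) _.
apply: (@leq_trans (\sum_(B in F @: A) k)).
  by apply: leq_sum => _ /imsetP[i iA ->]; apply: leFk.
by rewrite sum_nat_const leq_mul2r leq_imset_card orbT.
Qed.

(* The positions p, ..., p + 2d - 1 taken modulo L: before wrapping around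
   they lie in the blocks p/d, p/d + 1, p/d + 2, after it in block 0; if the
   wrap comes within d steps, in p/d, p/d + 1 before it and 0, 1 after it. *)
Definition window_blocks p L d : seq nat :=
  if p + d <= L then [:: p %/ d; (p %/ d).+1; (p %/ d).+2; 0]
  else [:: p %/ d; (p %/ d).+1; 0; 1].

Lemma size_window_blocks p L d : size (window_blocks p L d) = 4.
Proof. by rewrite /window_blocks; case: ifP. Qed.

Lemma mem_window_blocks p L d i : 0 < d -> p < L -> i < 2 * d ->
  (p + i) %% L %/ d \in window_blocks p L d.
Proof.
move=> d0 pL id.
have up2 m : m < p + 2 * d -> m %/ d <= (p %/ d).+2.
  move=> hm; have : m %/ d <= (2 * d + p) %/ d by apply: leq_div2r; lia.
  by rewrite divnMDl // add2n.
have up1 m : m < p + d -> m %/ d <= (p %/ d).+1.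
  move=> hm; have : m %/ d <= (1 * d + p) %/ d by apply: leq_div2r; lia.
  by rewrite divnMDl // add1n.
have lo m : p <= m -> p %/ d <= m %/ d by move=> hm; apply: leq_div2r.
rewrite /window_blocks; case: (ltnP (p + i) L) => h.
  rewrite modn_small //; have l1 := lo (p + i) (leq_addr _ _).
  case: ifP => hd.
    have u : (p + i) %/ d <= (p %/ d).+2 by apply: up2; lia.
    move: l1 u; move: ((p + i) %/ d) (p %/ d) => v q; rewrite !inE; lia.
  have u : (p + i) %/ d <= (p %/ d).+1 by apply: up1; lia.
  move: l1 u; move: ((p + i) %/ d) (p %/ d) => v q; rewrite !inE; lia.
have E : (p + i) %% L = (p + i - L) %% L by rewrite -{1}(subnK h) modnDr.
rewrite E; case: ifP => hd.
  rewrite modn_small; last by lia.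
  by rewrite divn_small ?inE ?eqxx ?orbT //; lia.
have hm : (p + i - L) %% L < 2 * d by apply: leq_ltn_trans (leq_mod _ _) _; lia.
have : (p + i - L) %% L %/ d < 2 by rewrite ltn_divLR // mulnC.
move: ((p + i - L) %% L %/ d) (p %/ d) => v q; rewrite !inE; lia.
Qed.

Lemma card_window_block_starts (T : finType) (phi : {perm T}) j z :
  #|[set block_start phi j (iter i phi z) | i : 'I_(2 ^ j.+1)]| <= 4.
Proof.
pose starts := [seq iter (a * 2 ^ j) phi (orbit_root phi z)
                 | a <- window_blocks (orbit_pos phi z) #|porbit phi z| (2 ^ j)].
apply: (@leq_trans #|starts|).
  apply/subset_leq_card/subsetP => _ /imsetP[i _ ->]; rewrite block_start_iter.
  apply: map_f; apply: mem_window_blocks; rewrite ?expn_gt0 ?orbit_pos_lt //.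
  by rewrite -expnS.
by rewrite (leq_trans (card_size _)) ?size_map ?size_window_blocks.
Qed.

Lemma red_degree_le_degree (T : finType) (G : trigraph T) x : red_degree G x <= degree G x.
Proof. by apply/subset_leq_card/subsetP => y; rewrite !inE; apply: tred_sub. Qed.

Section DyadicStageDegree.
Variables (T : finType) (G : trigraph T) (phi : {perm T}).
Hypothesis phi_aut : is_aut G phi.

Lemma tedge_iter i x y : tedge G (iter i phi x) (iter i phi y) = tedge G x y.
Proof. by elim: i => [//|i IHi]; rewrite !iterS phi_aut. Qed.

Lemma quot_adjacent_window R j (X Y : part R) x0 :
    partition R [set: T] -> fibers_refine (block_start phi j) R ->
    constant_on_parts (block_start phi j.+1) R -> x0 \in val X -> tedge (quot G R) X Y ->
  exists2 z, tedge G (block_start phi j.+1 x0) z &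
    exists i : 'I_(2 ^ j.+1), val Y = pblock R (block_start phi j (iter i phi z)).
Proof.
move=> partR fR cR x0X /andP[_ /forall_inPn[u uX /forall_inPn[v vY /negPn uv]]].
have pblockE (Z : part R) w : w \in val Z -> pblock R w = val Z.
  by apply: def_pblock (partition_trivIset partR) (valP Z).
have cu : block_start phi j.+1 u = block_start phi j.+1 x0.
  by apply: cR; rewrite (pblockE _ _ uX) (pblockE _ _ x0X).
pose i : 'I_(2 ^ j.+1) := Ordinal (ltn_pmod (orbit_pos phi u) (expn_gt0 2 j.+1)).
have ui : u = iter i phi (block_start phi j.+1 x0) by rewrite -cu iter_block_start.
pose z := ((phi ^+ i)^-1)%g v; have vz : v = iter i phi z by rewrite -permX permKV.
exists z; first by rewrite -(tedge_iter i) -ui -vz.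
exists i; rewrite -vz -(pblockE _ _ vY); apply: fR.
by rewrite block_start_idem.
Qed.

Lemma quot_degree_dyadic_stage R : dyadic_stage phi R ->
  forall X : part R, degree (quot G R) X <= 4 * Delta G.
Proof.
move=> [partR [j [fR cR]]] X.
have [x0 x0X] := set0Pn _ (partition_neq0 partR (valP X)).
set c := block_start phi j.+1 x0.
pose W z := pblock R @: [set block_start phi j (iter i phi z) | i : 'I_(2 ^ j.+1)].
have adjW : [set val Y | Y in [set Y | tedge (quot G R) X Y]] \subset
            \bigcup_(z in [set z | tedge G c z]) W z.
  apply/subsetP => y /imsetP[Y]; rewrite inE => XY ->.
  have [z cz [i ->]] := quot_adjacent_window partR fR cR x0X XY.
  by apply/bigcupP; exists z; rewrite ?inE //; apply/imset_f/imset_f.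
rewrite /degree -(card_imset _ val_inj) mulnC.
apply: leq_trans (subset_leq_card adjW) _; apply: leq_trans (card_bigcup_leq _) _.
  by move=> z _; apply: leq_trans (leq_imset_card _ _) (card_window_block_starts _ _ _).
by rewrite leq_mul2r (leq_bigmax c).
Qed.

End DyadicStageDegree.

Lemma imsetD1_inj (aT rT : finType) (f : aT -> rT) (A : {set aT}) a :
  injective f -> f @: (A :\ a) = f @: A :\ f a.
Proof.
move=> injf; apply/setP => y; rewrite !inE; apply/imsetP/andP => [[x]|[nya]].
  by rewrite !inE => /andP[nxa xA] ->; rewrite (inj_eq injf) nxa imset_f.
case/imsetP=> x xA eyx; exists x => //; rewrite !inE xA andbT.
by apply: contraNneq nya => exa; rewrite eyx exa.
Qed.

Lemma forall_in_bigcup (I U : finType) (A B : {pred I}) (F : I -> {set U}) (p : rel U) :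
  [forall u in \bigcup_(i in A) F i, forall w in \bigcup_(k in B) F k, p u w] =
  [forall i in A, forall k in B, forall u in F i, forall w in F k, p u w].
Proof.
have memU (C : {pred I}) i u : i \in C -> u \in F i -> u \in \bigcup_(k in C) F k.
  by move=> iC uFi; apply/bigcupP; exists i.
apply/forall_inP/forall_inP => [all_p i iA|all_p u /bigcupP[i iA uFi]].
  apply/forall_inP => k kB; apply/forall_inP => u uFi; apply/forall_inP => w wFk.
  by move/forall_inP: (all_p u (memU _ _ _ iA uFi)); apply; apply: memU kB wFk.
apply/forall_inP => w /bigcupP[k kB wFk].
move/forall_inP: (all_p i iA) => /(_ k kB)/forall_inP/(_ u uFi)/forall_inP; exact.
Qed.

Section LiftPartition.
Variables (T : finType) (G : trigraph T) (O : {set {set T}}).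
Hypothesis partO : partition O [set: T].

Definition lift_set (A : {set part O}) : {set T} := \bigcup_(U in A) val U.
Definition lift_partition (P : {set {set part O}}) : {set {set T}} := lift_set @: P.

Lemma lift_set_inj : injective lift_set.
Proof.
suff lift_setS A B : lift_set A \subset lift_set B -> A \subset B.
  by move=> A B eAB; apply/eqP; rewrite eqEsubset !lift_setS ?eAB.
move=> sAB; apply/subsetP => U UA.
have [x xU] := set0Pn _ (partition_neq0 partO (valP U)).
have /bigcupP[V VB xV] : x \in lift_set B.
  by apply/(subsetP sAB)/bigcupP; exists U.
have tiO := partition_trivIset partO.
suff -> : U = V by [].
by apply: val_inj; rewrite -(def_pblock tiO (valP U) xU) (def_pblock tiO (valP V) xV).
Qed.

Lemma lift_singletons : lift_partition (singletons (part O)) = O.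
Proof.
apply/setP => Z; apply/imsetP/idP => [[_ /imsetP[U _ ->] ->]|ZO].
  by rewrite /lift_set big_set1 (valP U).
by exists [set Sub Z ZO]; rewrite ?imset_f // /lift_set big_set1.
Qed.

Lemma lift_merge_step P Q :
  merge_step P Q -> merge_step (lift_partition P) (lift_partition Q).
Proof.
case/merge_stepP => A [B [AP BP nAB ->]]; apply/merge_stepP.
exists (lift_set A), (lift_set B); rewrite !imset_f ?(inj_eq lift_set_inj) //.
split=> //; rewrite /lift_partition /merge_parts imsetU1 !(imsetD1_inj _ _ lift_set_inj).
by rewrite {1}/lift_set bigcup_setU.
Qed.

Lemma lift_path P s : path (@merge_step _) P s ->
  path (@merge_step _) (lift_partition P) (map lift_partition s).
Proof.
elim: s P => [//|Q s IHs] P /= /andP[PQ Qs].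
by rewrite lift_merge_step ?IHs.
Qed.

Lemma tedge_quotE (U V : part O) :
  val U != val V -> tedge (quot G O) U V = ~~ non_adj G (val U) (val V).
Proof. by rewrite /= /qedge => ->. Qed.

Lemma tblack_quotE (U V : part O) :
  val U != val V -> tblack (quot G O) U V = all_black G (val U) (val V).
Proof.
move=> nUV; rewrite /tblack tedge_quotE //= /qred nUV /=.
case: (boolP (all_black _ _ _)) => [blUV|_]; last by case: (non_adj _ _ _).
rewrite andbT.
have [u uU] := set0Pn _ (partition_neq0 partO (valP U)).
have [v vV] := set0Pn _ (partition_neq0 partO (valP V)).
apply/forall_inPn; exists u => //; apply/forall_inPn; exists v => //.
by move/forall_inP: blUV => /(_ u uU)/forall_inP/(_ v vV)/andP[->].
Qed.

Lemma non_adj_lift_set (A B : {set part O}) : [disjoint A & B] ->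
  non_adj (quot G O) A B = non_adj G (lift_set A) (lift_set B).
Proof.
move=> disAB; rewrite /non_adj forall_in_bigcup.
apply: eq_forallb_in => U UA; apply: eq_forallb_in => V VB.
rewrite tedge_quotE ?negbK // (inj_eq val_inj).
by apply: contraTneq VB => <-; rewrite (disjointFr disAB UA).
Qed.

Lemma all_black_lift_set (A B : {set part O}) : [disjoint A & B] ->
  all_black (quot G O) A B = all_black G (lift_set A) (lift_set B).
Proof.
move=> disAB; rewrite /all_black forall_in_bigcup.
apply: eq_forallb_in => U UA; apply: eq_forallb_in => V VB.
rewrite tblack_quotE // (inj_eq val_inj).
by apply: contraTneq VB => <-; rewrite (disjointFr disAB UA).
Qed.

Section LiftParts.
Variable P : {set {set part O}}.
Hypothesis tiP : trivIset P.

Definition lift_part (A : part P) : part (lift_partition P) :=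
  Sub (lift_set (val A)) (imset_f lift_set (valP A)).

Lemma lift_part_surj (X : part (lift_partition P)) : exists A, X = lift_part A.
Proof.
have /imsetP[A AP eXA] := valP X.
by exists (Sub A AP); apply: val_inj; rewrite /= eXA.
Qed.

Lemma tred_lift_part A B :
  tred (quot G (lift_partition P)) (lift_part A) (lift_part B) =
  tred (quot (quot G O) P) A B.
Proof.
rewrite /= /qred /= (inj_eq lift_set_inj).
have [//|nAB] := eqVneq (val A) (val B).
have disAB := trivIsetP tiP _ _ (valP A) (valP B) nAB.
by rewrite non_adj_lift_set ?all_black_lift_set.
Qed.

Lemma max_red_degree_lift :
  max_red_degree (quot G (lift_partition P)) <= max_red_degree (quot (quot G O) P).
Proof.
apply/bigmax_leqP => X _; have [A ->] := lift_part_surj X.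
apply: leq_trans (leq_bigmax A); rewrite /red_degree.
apply: leq_trans (leq_imset_card lift_part _); apply/subset_leq_card/subsetP => Y.
have [B ->] := lift_part_surj Y; rewrite !inE tred_lift_part => AB.
by rewrite imset_f ?inE.
Qed.

End LiftParts.
End LiftPartition.

Lemma tww_at_most_tww (T : finType) (G : trigraph T) : tww_at_most G (tww G).
Proof. by rewrite /tww; case: ex_minnP => m /asboolP. Qed.

Lemma tww_min (T : finType) (G : trigraph T) k : tww_at_most G k -> tww G <= k.
Proof. by move=> Gk; rewrite /tww; case: ex_minnP => m _; apply; apply/asboolP. Qed.

Lemma tww_le_quot (T : finType) (G : trigraph T) O s k : partition O [set: T] ->
    partial_ctr_seq s -> last_part s = O -> width G s <= k ->
  tww G <= maxn k (tww (quot G O)).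
Proof.
move=> partO ps ls ws; have [s' [[ps' cs'] ws']] := tww_at_most_tww (quot G O).
apply: tww_min; exists (s ++ map (@lift_partition _ O) s'); split; first split.
- rewrite /partial_ctr_seq cat_path -/(partial_ctr_seq s) ps -/(last_part s) ls.
  by rewrite -{1}(lift_singletons O) (lift_path partO).
- rewrite /last_part last_cat -/(last_part s) ls -{1}(lift_singletons O) last_map.
  exact: leq_trans (leq_imset_card _ _) cs'.
apply/bigmax_leqP_seq => P; rewrite -cat_cons mem_cat => /orP[Ps _|].
  by apply: leq_trans (leq_maxl _ _); apply: leq_trans ws; apply: leq_bigmax_seq.
case/mapP => P' P's' -> _; apply: leq_trans (leq_maxr _ _); apply: leq_trans ws'.
have partP' := path_merge_partition (partition_singletons _) ps' P's'.
apply: leq_trans (max_red_degree_lift G partO (partition_trivIset partP')) _.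
by apply: leq_bigmax_seq; rewrite // inE P's' orbT.
Qed.

Theorem mainTheorem14 (T : finType) (G : trigraph T) (phi : {perm T}) :
  is_aut G phi ->
  (exists s : seq {set {set T}},
      [/\ partial_ctr_seq s, last_part s = porbits phi & width G s <= 4 * Delta G])
  /\ tww G <= maxn (4 * Delta G) (tww (quot G (porbits phi))).
Proof.
move=> phi_aut; have [s [ps ls stages]] := dyadic_stages phi #|T|.
rewrite dyadic_level_top in ls.
have ws : width G s <= 4 * Delta G.
  apply/bigmax_leqP_seq => R /stages stR _; apply/bigmax_leqP => X _.
  exact: leq_trans (red_degree_le_degree _ _) (quot_degree_dyadic_stage phi_aut stR X).
split; first by exists s.
apply: tww_le_quot ps ls ws.
by rewrite -dyadic_level_top; apply: preim_partitionP.
Qed.
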